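(* Let $(P,\le)$ be a finite poset and $v:P\to\mathbb{R}$ a function. In each of the following four cases the given function $d_v:P\times P\to\mathbb{R}$ is a metric on $P$: (i) $\downarrow x\cap\downarrow y\neq\emptyset$ for all $x,y\in P$ and $v$ is a strictly isotone lower valuation; $d_v(x,y)=v(x)+v(y)-2v^-(x,y)$. (ii) $\uparrow x\cap\uparrow y\neq\emptyset$ for all $x,y\in P$ and $v$ is a strictly antitone lower valuation; $d_v(x,y)=v(x)+v(y)-2v^+(x,y)$. (iii) $\uparrow x\cap\uparrow y\neq\emptyset$ for all $x,y\in P$ and $v$ is a strictly isotone upper valuation; $d_v(x,y)=2v^+(x,y)-v(x)-v(y)$. (iv) $\downarrow x\cap\downarrow y\neq\emptyset$ for all $x,y\in P$ and $v$ is a strictly antitone upper valuation; $d_v(x,y)=2v^-(x,y)-v(x)-v(y)$.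
   Context: For a poset $(P,\le)$ and $x\in P$: $\downarrow x=\{x'\in P: x'\le x\}$, $\uparrow x=\{x'\in P: x\le x'\}$. A function $f:P\to\mathbb{R}$ is isotone if $x\le y\Rightarrow f(x)\le f(y)$, strictly isotone if $x<y\Rightarrow f(x)<f(y)$, antitone if $x\le y\Rightarrow f(x)\ge f(y)$, strictly antitone if $x<y\Rightarrow f(x)>f(y)$. For a monotone $f$ and $x,y\in P$ define $f^-(x,y)=\sup\{f(z):z\in\downarrow x\cap\downarrow y\}$ if $f$ is isotone, $=\inf\{f(z):z\in\downarrow x\cap\downarrow y\}$ if $f$ is antitone; $f^+(x,y)=\inf\{f(z):z\in\uparrow x\cap\uparrow y\}$ if $f$ is isotone, $=\sup\{f(z):z\in\uparrow x\cap\uparrow y\}$ if $f$ is antitone; with the conventions $\inf\emptyset=+\infty$, $\sup\emptyset=-\infty$. A lower valuation is either an isotone $v:P\to\mathbb{R}$ such that $\downarrow x\cap\downarrow y\neq\emptyset$ for all $x,y$, or an antitone $v$ such that $\uparrow x\cap\uparrow y\neq\emptyset$ for all $x,y$, satisfying in either case $v(x)+v(y)\le v^-(x,y)+v^+(x,y)$ for all $x,y\in P$. An upper valuation is either an isotone $v$ such that $\uparrow x\cap\uparrow y\neq\emptyset$ for all $x,y$, or an antitone $v$ such that $\downarrow x\cap\downarrow y\neq\emptyset$ for all $x,y$, satisfying in either case $v^-(x,y)+v^+(x,y)\le v(x)+v(y)$ for all $x,y\in P$. *)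

From HB Require Import structures.
From mathcomp Require Import all_boot all_order all_algebra.
Set Implicit Arguments. Unset Strict Implicit. Unset Printing Implicit Defensive.
Import Order.TTheory GRing.Theory Num.Theory.
Local Open Scope ring_scope.

Section Defs.
Context {d : Order.disp_t} {P : finPOrderType d} {R : realFieldType}.

Definition lowset (x y : P) : {set P} := [set z | (z <= x)%O && (z <= y)%O].
Definition upset (x y : P) : {set P} := [set z | (x <= z)%O && (y <= z)%O].

Definition isotone (f : P -> R) := forall x y : P, (x <= y)%O -> f x <= f y.
Definition strictly_isotone (f : P -> R) := forall x y : P, (x < y)%O -> f x < f y.
Definition antitone (f : P -> R) := forall x y : P, (x <= y)%O -> f y <= f x.
Definition strictly_antitone (f : P -> R) := forall x y : P, (x < y)%O -> f y < f x.

Inductive ext := Fin of R | PInf | NInf.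

Definition ext_le (a b : ext) : Prop :=
  match a, b with
  | NInf, _ => True
  | _, PInf => True
  | Fin a, Fin b => a <= b
  | _, _ => False
  end.

(* +oo + -oo never arises in the definitions below (one summand is always finite). *)
Definition ext_add (a b : ext) : ext :=
  match a, b with
  | Fin a, Fin b => Fin (a + b)
  | PInf, _ | _, PInf => PInf
  | _, _ => NInf
  end.

Definition ext_sup (f : P -> R) (S : {set P}) : ext :=
  if [pick z in S] is Some z0 then Fin (\big[Num.max/f z0]_(z in S) f z) else NInf.
Definition ext_inf (f : P -> R) (S : {set P}) : ext :=
  if [pick z in S] is Some z0 then Fin (\big[Num.min/f z0]_(z in S) f z) else PInf.

Definition ext_val (a : ext) : R := if a is Fin r then r else 0.

(* real-valued sup / inf (used only where the set is nonempty) *)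
Definition fsup (f : P -> R) (S : {set P}) : R := ext_val (ext_sup f S).
Definition finf (f : P -> R) (S : {set P}) : R := ext_val (ext_inf f S).

Definition down_directed := forall x y : P, lowset x y != set0.
Definition up_directed := forall x y : P, upset x y != set0.

Definition minus_iso f x y := ext_sup f (lowset x y).
Definition plus_iso f x y := ext_inf f (upset x y).
Definition minus_anti f x y := ext_inf f (lowset x y).
Definition plus_anti f x y := ext_sup f (upset x y).

Definition lower_valuation (v : P -> R) : Prop :=
  (isotone v /\ down_directed /\
   forall x y, ext_le (Fin (v x + v y)) (ext_add (minus_iso v x y) (plus_iso v x y)))
  \/
  (antitone v /\ up_directed /\
   forall x y, ext_le (Fin (v x + v y)) (ext_add (minus_anti v x y) (plus_anti v x y))).

Definition upper_valuation (v : P -> R) : Prop :=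
  (isotone v /\ up_directed /\
   forall x y, ext_le (ext_add (minus_iso v x y) (plus_iso v x y)) (Fin (v x + v y)))
  \/
  (antitone v /\ down_directed /\
   forall x y, ext_le (ext_add (minus_anti v x y) (plus_anti v x y)) (Fin (v x + v y))).

Definition is_metric (dist : P -> P -> R) : Prop :=
  (forall x y, 0 <= dist x y) /\
  (forall x y, dist x y = 0 <-> x = y) /\
  (forall x y, dist x y = dist y x) /\
  (forall x y z, dist x z <= dist x y + dist y z).

End Defs.

From HB Require Import structures.
From mathcomp Require Import all_boot all_order all_algebra.
From mathcomp Require Import lra.

Set Implicit Arguments.
Unset Strict Implicit.
Unset Printing Implicit Defensive.
Import Order.TTheory GRing.Theory Num.Theory.
Local Open Scope ring_scope.

(* All four cases are instances of a single statement about a preorder r on P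
   and a map w strictly increasing along r.  Write L x y for the set of common
   r-lower bounds of x and y and m x y for the maximum of w on L x y.  If every
   L x y is nonempty and w satisfies the one-sided modularity bound
     r a y -> r b y -> w a + w b <= m a b + w y,
   then w x + w y - 2 m x y is a metric ([lower_metric]): m x y is attained at
   some z in L x y, so it is at most w x and w y, and by strictness it equals
   both only when z = x = y; the triangle inequality reduces to the modularity
   bound applied to the points attaining m x y and m y z.
   Applying this to the reversed preorder and to -v turns the infimum of v over
   common upper bounds into a supremum, which gives the dual metric
   2 m' x y - v x - v y ([upper_metric]).  Cases (i)-(iv) take r = <= or >=;
   the modularity bound is read off the valuation inequality, the remaining
   branch of each valuation being degenerate since v is then both strictly
   and weakly monotone in opposite directions, which forces a discrete order. *)

Section FiniteExtrema.
Context {d : Order.disp_t} {P : finPOrderType d} {R : realFieldType}.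
Implicit Types (f : P -> R) (S : {set P}).

Lemma ext_sup_fin f S : S != set0 -> ext_sup f S = Fin (fsup f S).
Proof.
case/set0Pn=> y Sy; rewrite /fsup /ext_sup.
by case: pickP => [//|S0]; have := S0 y; rewrite Sy.
Qed.

Lemma ext_inf_fin f S : S != set0 -> ext_inf f S = Fin (finf f S).
Proof.
case/set0Pn=> y Sy; rewrite /finf /ext_inf.
by case: pickP => [//|S0]; have := S0 y; rewrite Sy.
Qed.

Lemma fsup_ub f S z : z \in S -> f z <= fsup f S.
Proof.
move=> Sz; rewrite /fsup /ext_sup; case: pickP => [z0 _|S0] /=.
  exact: (bigmax_sup z).
by have := S0 z; rewrite Sz.
Qed.

Lemma finf_lb f S z : z \in S -> finf f S <= f z.
Proof.
move=> Sz; rewrite /finf /ext_inf; case: pickP => [z0 _|S0] /=.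
  exact: (bigmin_inf z).
by have := S0 z; rewrite Sz.
Qed.

Lemma fsup_attained f S : S != set0 -> exists2 z, z \in S & fsup f S = f z.
Proof.
case/set0Pn=> y Sy; rewrite /fsup /ext_sup.
case: pickP => [z0 Sz0|S0] /=; last by have := S0 y; rewrite Sy.
elim/big_ind: _ => [|m1 m2 [z1 S1 ->] [z2 S2 ->]|z Sz]; first by exists z0.
  by case: (leP (f z1) (f z2)); [exists z2|exists z1].
by exists z.
Qed.

Lemma fsupN f S : fsup (fun z => - f z) S = - finf f S.
Proof.
rewrite /fsup /finf /ext_sup /ext_inf; case: pickP => [z0 _|_] /=; last first.
  by rewrite oppr0.
by rewrite (big_morph _ (@oppr_min R) (erefl (- f z0))).
Qed.

End FiniteExtrema.

Section PreorderMetric.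
Context {d : Order.disp_t} {P : finPOrderType d} {R : realFieldType}.
Variable r : rel P.
Hypothesis r_refl : reflexive r.
Hypothesis r_trans : transitive r.

Definition rlow x y : {set P} := [set z | r z x && r z y].
Definition rup x y : {set P} := [set z | r x z && r y z].

Lemma rlowC x y : rlow x y = rlow y x.
Proof. by apply/setP=> z; rewrite !inE andbC. Qed.

Section Lower.
Variable w : P -> R.
Hypothesis w_strict : forall x y, r x y -> x != y -> w x < w y.
Hypothesis rlow_nonempty : forall x y, rlow x y != set0.
Hypothesis modular : forall a b y, r a y -> r b y -> w a + w b <= fsup w (rlow a b) + w y.

Lemma w_mono x y : r x y -> w x <= w y.
Proof. by move=> rxy; case: (eqVneq x y) => [->//|nxy]; exact/ltW/(w_strict rxy). Qed.

Lemma meet_attained x y :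
  exists z, [/\ r z x, r z y & fsup w (rlow x y) = w z].
Proof.
by case: (fsup_attained w (rlow_nonempty x y)) => z; rewrite inE => /andP[? ?]; exists z.
Qed.

Lemma meet_le x y : fsup w (rlow x y) <= w x /\ fsup w (rlow x y) <= w y.
Proof. by case: (meet_attained x y) => z [zx zy ->]; split; exact: w_mono. Qed.

(* If m x y = w x then x itself is a lower bound of y: any other maximizer
   z with r z x would have w z < w x. *)
Lemma meet_eq_left x y : fsup w (rlow x y) = w x -> r x y.
Proof.
case: (meet_attained x y) => z [zx zy ->] wzx.
case: (eqVneq z x) => [<- //|nzx].
by have := w_strict zx nzx; rewrite wzx ltxx.
Qed.

Lemma lower_metric :
  is_metric (fun x y => w x + w y - 2 * fsup w (rlow x y)).
Proof.
have meet_self x : fsup w (rlow x x) = w x.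
  apply/le_anti; rewrite (proj1 (meet_le x x)) fsup_ub //.
  by rewrite inE r_refl.
split; [|split; [|split]].
- by move=> x y; case: (meet_le x y) => mx my; lra.
- move=> x y; split=> [dxy0|->]; last by rewrite meet_self; lra.
  case: (meet_le x y) => mx my.
  have rxy : r x y by apply: meet_eq_left; lra.
  have ryx : r y x by apply: meet_eq_left; rewrite rlowC; lra.
  case: (eqVneq x y) => // nxy.
  by have := w_strict rxy nxy; rewrite ltNge (w_mono ryx).
- by move=> x y; rewrite rlowC [w y + _]addrC.
- move=> x y z.
  case: (meet_attained x y) => a [ax ay ->]; case: (meet_attained y z) => b [by_ bz ->].
  have mab_le : fsup w (rlow a b) <= fsup w (rlow x z).
    case: (meet_attained a b) => c [ca cb ->]; apply: fsup_ub.
    by rewrite inE (r_trans ca ax) (r_trans cb bz).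
  by have := modular ay by_; lra.
Qed.

End Lower.
End PreorderMetric.

Lemma is_metric_ext {d : Order.disp_t} {P : finPOrderType d} {R : realFieldType}
    (d1 d2 : P -> P -> R) :
  (forall x y, d1 x y = d2 x y) -> is_metric d1 -> is_metric d2.
Proof.
move=> e [pos [sep [sym tri]]].
by split; [|split; [|split]] => *; rewrite -?e.
Qed.

(* Dual form: for v strictly increasing along r, the infimum over common upper
   bounds gives the metric 2 m' x y - v x - v y, obtained from [lower_metric]
   for the reversed preorder and the function -v. *)
Lemma upper_metric {d : Order.disp_t} {P : finPOrderType d} {R : realFieldType}
    (r : rel P) (v : P -> R) :
  reflexive r -> transitive r ->
  (forall x y, r x y -> x != y -> v x < v y) ->
  (forall x y, rup r x y != set0) ->
  (forall a b y, r y a -> r y b -> finf v (rup r a b) + v y <= v a + v b) ->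
  is_metric (fun x y => 2 * finf v (rup r x y) - v x - v y).
Proof.
move=> r_refl r_trans v_strict rup_nonempty modular.
pose rr := fun x y => r y x.
have rr_trans : transitive rr by move=> y x z rxy ryz; exact: r_trans ryz rxy.
have rlow_rr x y : rlow rr x y = rup r x y by [].
apply: is_metric_ext (@lower_metric _ _ _ rr r_refl rr_trans (fun z => - v z) _ _ _).
- by move=> x y /=; rewrite rlow_rr fsupN; lra.
- by move=> x y ryx nxy; rewrite ltrN2 v_strict // eq_sym.
- by move=> x y; rewrite rlow_rr.
- by move=> a b y ya yb; rewrite rlow_rr fsupN; have := modular a b y ya yb; lra.
Qed.

Section Valuations.
Context {d : Order.disp_t} {P : finPOrderType d} {R : realFieldType}.
Variable v : P -> R.

Lemma strictly_isotone_le : strictly_isotone v ->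
  forall x y : P, (x <= y)%O -> x != y -> v x < v y.
Proof. by move=> sv x y xy nxy; apply: sv; rewrite lt_neqAle nxy. Qed.

Lemma strictly_antitone_ge : strictly_antitone v ->
  forall x y : P, (y <= x)%O -> x != y -> v x < v y.
Proof. by move=> sv x y yx nxy; apply: sv; rewrite lt_neqAle eq_sym nxy. Qed.

(* A map that is strictly monotone and weakly monotone in the opposite
   direction can only live on a discrete order; this disposes of the
   mismatched branch of each valuation hypothesis. *)
Lemma strictly_isotone_antitone_discrete :
  strictly_isotone v -> antitone v -> forall x y : P, (x <= y)%O -> x = y.
Proof.
move=> sv av x y xy; case: (eqVneq x y) => // nxy.
by have := strictly_isotone_le sv xy nxy; rewrite ltNge av.
Qed.

Lemma strictly_antitone_isotone_discrete :
  strictly_antitone v -> isotone v -> forall x y : P, (x <= y)%O -> x = y.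
Proof.
move=> sv iv x y xy; case: (eqVneq y x) => [//|nyx].
by have := strictly_antitone_ge sv xy nyx; rewrite ltNge iv.
Qed.

(* The one-sided modularity bounds required by [lower_metric] and
   [upper_metric]: the valuation inequality, with the infimum (resp. supremum)
   over common bounds estimated by the value at one particular bound y. *)
Lemma lower_valuation_iso_bound : strictly_isotone v -> lower_valuation v ->
  forall a b y : P, (a <= y)%O -> (b <= y)%O ->
  v a + v b <= fsup v (lowset a b) + v y.
Proof.
move=> sv [[_ [low_ne val]]|[av _]] a b y ay b_y.
  have up_ne : upset a b != set0 by apply/set0Pn; exists y; rewrite inE ay b_y.
  have := val a b; rewrite /minus_iso /plus_iso ext_sup_fin // ext_inf_fin //=.
  by move/le_trans; apply; rewrite lerD2l finf_lb // inE ay b_y.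
have discrete := strictly_isotone_antitone_discrete sv av.
by rewrite (discrete _ _ ay) (discrete _ _ b_y) lerD2r fsup_ub // inE lexx.
Qed.

Lemma lower_valuation_anti_bound : strictly_antitone v -> lower_valuation v ->
  forall a b y : P, (y <= a)%O -> (y <= b)%O ->
  v a + v b <= fsup v (upset a b) + v y.
Proof.
move=> sv [[iv _]|[_ [up_ne val]]] a b y ya yb; last first.
  have low_ne : lowset a b != set0 by apply/set0Pn; exists y; rewrite inE ya yb.
  have := val a b; rewrite /minus_anti /plus_anti ext_sup_fin // ext_inf_fin //=.
  by move/le_trans; apply; rewrite addrC lerD2l finf_lb // inE ya yb.
have discrete := strictly_antitone_isotone_discrete sv iv.
by rewrite -(discrete _ _ ya) -(discrete _ _ yb) lerD2r fsup_ub // inE lexx.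
Qed.

Lemma upper_valuation_iso_bound : strictly_isotone v -> upper_valuation v ->
  forall a b y : P, (y <= a)%O -> (y <= b)%O ->
  finf v (upset a b) + v y <= v a + v b.
Proof.
move=> sv [[_ [up_ne val]]|[av _]] a b y ya yb.
  have low_ne : lowset a b != set0 by apply/set0Pn; exists y; rewrite inE ya yb.
  have := val a b; rewrite /minus_iso /plus_iso ext_sup_fin // ext_inf_fin //=.
  by apply: le_trans; rewrite addrC lerD2r fsup_ub // inE ya yb.
have discrete := strictly_isotone_antitone_discrete sv av.
by rewrite -(discrete _ _ ya) -(discrete _ _ yb) lerD2r finf_lb // inE lexx.
Qed.

Lemma upper_valuation_anti_bound : strictly_antitone v -> upper_valuation v ->
  forall a b y : P, (a <= y)%O -> (b <= y)%O ->
  finf v (lowset a b) + v y <= v a + v b.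
Proof.
move=> sv [[iv _]|[_ [low_ne val]]] a b y ay b_y; last first.
  have up_ne : upset a b != set0 by apply/set0Pn; exists y; rewrite inE ay b_y.
  have := val a b; rewrite /minus_anti /plus_anti ext_sup_fin // ext_inf_fin //=.
  by apply: le_trans; rewrite lerD2l fsup_ub // inE ay b_y.
have discrete := strictly_antitone_isotone_discrete sv iv.
by rewrite (discrete _ _ ay) (discrete _ _ b_y) lerD2r finf_lb // inE lexx.
Qed.

End Valuations.

Theorem mainTheorem1 (d : Order.disp_t) (P : finPOrderType d) (R : realFieldType)
  (v : P -> R) :
  (down_directed (P := P) -> strictly_isotone v -> lower_valuation v ->
     is_metric (fun x y => v x + v y - 2 * fsup v (lowset x y)))
  /\
  (up_directed (P := P) -> strictly_antitone v -> lower_valuation v ->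
     is_metric (fun x y => v x + v y - 2 * fsup v (upset x y)))
  /\
  (up_directed (P := P) -> strictly_isotone v -> upper_valuation v ->
     is_metric (fun x y => 2 * finf v (upset x y) - v x - v y))
  /\
  (down_directed (P := P) -> strictly_antitone v -> upper_valuation v ->
     is_metric (fun x y => 2 * finf v (lowset x y) - v x - v y)).
Proof.
split; [|split; [|split]] => directed sv val.
- exact: (lower_metric (r := <=%O) lexx le_trans (strictly_isotone_le sv)
           directed (lower_valuation_iso_bound sv val)).
- exact: (lower_metric (r := >=%O) lexx ge_trans (strictly_antitone_ge sv)
           directed (lower_valuation_anti_bound sv val)).
- exact: (upper_metric (r := <=%O) lexx le_trans (strictly_isotone_le sv)
           directed (upper_valuation_iso_bound sv val)).
- exact: (upper_metric (r := >=%O) lexx ge_trans (strictly_antitone_ge sv)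
           directed (upper_valuation_anti_bound sv val)).
Qed.
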